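(* Let $(U,\Phi)$ be a one-dimensional quantum walk with one defect with an initial state $\Phi\in\mathcal H_0$. Then $(U,\Phi)$ is unitary equivalent to $(U_{r,\nu},\Phi_{\alpha,\theta})$ for some $0\le r_\varepsilon,\alpha\le1$ ($\varepsilon=\pm,0$) and $\nu_i,\theta\in\mathbb R$ ($i=1,2$), where $\Phi_{\alpha,\theta}=\alpha e_1^0+e^{i\theta}\sqrt{1-\alpha^2}\,e_2^0$ and \begin{align*} U_{r,\nu}={}&|e_1^{-1}\rangle\langle r_0e_1^0+e^{i\nu_1}s_0e_2^0|+|e_2^{1}\rangle\langle -e^{i\nu_2}s_0e_1^0+e^{i(\nu_1+\nu_2)}r_0e_2^0|\\ &+\sum_{n\in\mathbb Z\setminus\{0\}}|e_1^{n-1}\rangle\langle r_\pm e_1^n+s_\pm e_2^n|+|e_2^{n+1}\rangle\langle -s_\pm e_1^n+r_\pm e_2^n|, \end{align*} with $s_\varepsilon=\sqrt{1-r_\varepsilon^2}$, $r=(r_\pm,r_0)$, $\nu=(\nu_1,\nu_2)$. Moreover, for $0<r_\varepsilon,r'_\varepsilon,\alpha,\alpha'<1$ and $\nu_i,\nu'_i,\theta,\theta'\in[0,2\pi)$, $(U_{r,\nu},\Phi_{\alpha,\theta})$ and $(U_{r',\nu'},\Phi_{\alpha',\theta'})$ are unitary equivalent if and only if $r=r'$, $\nu=\nu'$, $\alpha=\alpha'$ and $\theta=\theta'$.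
   Context: Let $\mathcal H_n=\mathbb C^2$ for $n\in\mathbb Z$, $\mathcal H=\bigoplus_{n\in\mathbb Z}\mathcal H_n$, $P_n$ the orthogonal projection onto $\mathcal H_n$, and $\{e_1^n,e_2^n\}$ the standard basis of $\mathcal H_n$; each $\mathcal H_n$ is identified with $\mathbb C^2$. Dirac notation: $|x\rangle\langle y|$ is the operator $z\mapsto\langle y,z\rangle x$ (inner product conjugate-linear in the first argument). A one-dimensional quantum walk is a unitary $U$ on $\mathcal H$ with $\operatorname{rank}(P_nUP_m)=1$ if $m=n\pm1$ and $0$ otherwise. Every such $U$ can be written as $U=\sum_{n\in\mathbb Z}|\xi_{n-1,n}\rangle\langle\zeta_{n-1,n}|+|\xi_{n+1,n}\rangle\langle\zeta_{n+1,n}|$, where $\{\xi_{n,n+1},\xi_{n+1,n}\}_{n}$ and $\{\zeta_{n,n+1},\zeta_{n+1,n}\}_{n}$ are orthonormal bases of $\mathcal H$ with $\xi_{n,n+1},\zeta_{n+1,n}\in\mathcal H_n$ and $\xi_{n+1,n},\zeta_{n,n+1}\in\mathcal H_{n+1}$. $U$ is a one-dimensional quantum walk with one defect if it has such a representation for which there exist $\xi_1,\xi_2,\zeta_1,\zeta_2\in\mathbb C^2$ with $\xi_{n,n+1}=\xi_1$, $\xi_{n,n-1}=\xi_2$, $\zeta_{n-1,n}=\zeta_1$, $\zeta_{n+1,n}=\zeta_2$ for all $n\in\mathbb Z\setminus\{0\}$. An initial state is a unit vector $\Phi\in\mathcal H_0$. Since a walk $U$ is identified with $e^{i\lambda}U$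 and a state $\Phi$ with $e^{i\lambda}\Phi$, pairs $(U,\Phi)$ and $(U',\Phi')$ are called unitary equivalent if there exist $\lambda,\lambda'\in\mathbb R$ and a unitary $W=\bigoplus_nW_n$ ($W_n$ unitary on $\mathcal H_n$) with $e^{i\lambda}WUW^*=U'$ and $e^{i\lambda'}W\Phi=\Phi'$. *)

From HB Require Import structures.
From mathcomp Require Import all_boot all_order all_algebra.
From mathcomp Require Import all_classical all_reals.
From mathcomp Require Import trigo.
From mathcomp Require Import complex.
Set Implicit Arguments. Unset Strict Implicit. Unset Printing Implicit Defensive.
Import Order.TTheory GRing.Theory Num.Theory.
Local Open Scope ring_scope.

Section QW.
Variable R : realType.
Local Notation C := R[i].

(* vectors of H_n = C^2 are column vectors; operators H_m -> H_n are 2x2 matrices *)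
Definition vec := 'cV[C]_2.
Definition blk := 'M[C]_2.

Definition adj (m n : nat) (A : 'M[C]_(m, n)) : 'M[C]_(n, m) :=
  (map_mx (@conjc R) A)^T.

Definition ketbra (x y : vec) : blk := x *m adj y.

Definition e1 : vec := \col_(i < 2) (if i == 0 :> nat then 1 else 0).
Definition e2 : vec := \col_(i < 2) (if i == 1 :> nat then 1 else 0).

Definition expi (t : R) : C := (cos t +i* sin t)%C.
Definition rc (x : R) : C := (x%:C)%C.

Definition unit_vec (x : vec) : Prop := adj x *m x = 1%:M.
Definition onb2 (x y : vec) : Prop :=
  [/\ adj x *m x = 1%:M, adj y *m y = 1%:M & adj x *m y = 0].
Definition unitary2 (W : blk) : Prop :=
  adj W *m W = 1%:M /\ W *m adj W = 1%:M.

(* An operator U on H = (+)_{n in Z} C^2 whose blocks P_n U P_m vanish unless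
   |n - m| = 1 is given by its block matrix  B n m = P_n U P_m  (the entry
   (i,j) of B n m being <e_i^n, U e_j^m>).  Such a banded operator is unitary
   iff the block identities  U^*U = 1 = U U^*  hold (finite sums). *)
Definition op := int -> int -> blk.

Definition is_qw (B : op) : Prop :=
  [/\ (forall n m : int, (m = n + 1 \/ m = n - 1) -> \rank (B n m) = 1%N),
      (forall n m : int, m <> n + 1 -> m <> n - 1 -> B n m = 0),
      (forall n m : int,
         adj (B (n - 1) n) *m B (n - 1) m + adj (B (n + 1) n) *m B (n + 1) m
         = (if n == m then 1%:M else 0)) &
      (forall n m : int,
         B n (m - 1) *m adj (B m (m - 1)) + B n (m + 1) *m adj (B m (m + 1))
         = (if n == m then 1%:M else 0))].

(* U = sum_n |xi_{n-1,n}><zeta_{n-1,n}| + |xi_{n+1,n}><zeta_{n+1,n}| with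
   xiR n = xi_{n,n+1}, xiL n = xi_{n,n-1} (in H_n),
   zetaL n = zeta_{n-1,n}, zetaR n = zeta_{n+1,n} (in H_n). *)
Definition qw_rep (B : op) (xiR xiL zetaL zetaR : int -> vec) : Prop :=
  [/\ (forall n, onb2 (xiR n) (xiL n)),
      (forall n, onb2 (zetaL n) (zetaR n)) &
      (forall n m : int, B n m =
         (if m == n + 1 then ketbra (xiR n) (zetaL m) else 0) +
         (if m == n - 1 then ketbra (xiL n) (zetaR m) else 0))].

Definition one_defect_qw (B : op) : Prop :=
  is_qw B /\
  exists (xiR xiL zetaL zetaR : int -> vec) (xi1 xi2 zeta1 zeta2 : vec),
    qw_rep B xiR xiL zetaL zetaR /\
    forall n : int, n != 0 ->
      [/\ xiR n = xi1, xiL n = xi2, zetaL n = zeta1 & zetaR n = zeta2].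

Definition init_state (Phi : vec) : Prop := unit_vec Phi.

Definition unit_equiv (B : op) (Phi : vec) (B' : op) (Phi' : vec) : Prop :=
  exists (lam lam' : R) (W : int -> blk),
    (forall n, unitary2 (W n)) /\
    (forall n m : int, expi lam *: (W n *m B n m *m adj (W m)) = B' n m) /\
    expi lam' *: (W 0 *m Phi) = Phi'.

Definition sq (r : R) : R := Num.sqrt (1 - r ^+ 2).

Definition Phi_at (alpha theta : R) : vec :=
  rc alpha *: e1 + (expi theta * rc (sq alpha)) *: e2.

Definition U_rnu (rpm r0 nu1 nu2 : R) : op := fun n m =>
  (if m == n + 1 then
     (if m == 0 then ketbra e1 (rc r0 *: e1 + (expi nu1 * rc (sq r0)) *: e2)
      else ketbra e1 (rc rpm *: e1 + rc (sq rpm) *: e2))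
   else 0) +
  (if m == n - 1 then
     (if m == 0 then ketbra e2 ((- (expi nu2 * rc (sq r0))) *: e1
                                + (expi (nu1 + nu2) * rc r0) *: e2)
      else ketbra e2 ((- rc (sq rpm)) *: e1 + rc rpm *: e2))
   else 0).

End QW.

From HB Require Import structures.
From mathcomp Require Import all_boot all_order all_algebra.
From mathcomp Require Import all_classical all_reals.
From mathcomp Require Import trigo.
From mathcomp Require Import complex.
From mathcomp Require Import zify ring lra.
Import Order.TTheory GRing.Theory Num.Theory.
Local Open Scope ring_scope.
Set Implicit Arguments. Unset Strict Implicit. Unset Printing Implicit Defensive.

(** Existence.  On the fibre H_n let W_n be the unitary sending the outgoing basis
    (xi_{n,n+1}, xi_{n,n-1}) to (p_n e_1, q_n e_2) with |p_n| = |q_n| = 1.  Conjugation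
    by W turns each block of U into |e_1><v| or |e_2><v|, where v is read off from the
    unitary transition matrix between outgoing and incoming bases at the target site,
        [[e^{ia} r, -e^{i(k-b)} s], [e^{ib} s, e^{i(k-a)} r]],   s = sqrt (1 - r^2).
    With the global phase e^{ik/2} and phases p_n, q_n affine in n on either side of the
    defect, every angle cancels except the two defect phases nu_1, nu_2; the phase of the
    state makes its e_1-coefficient real and leaves theta.

    Uniqueness.  Both walks map H_{n+1} into C e_1^n and H_{n-1} into C e_2^n, so an
    equivalence between them is diagonal, W_n = diag (e^{i a_n}, e^{i b_n}).  Comparing
    moduli on the edges gives r = r', and the phase relations on the edges between the
    sites -1, 0, 1, 2 telescope to e^{i(nu_j - nu_j')} = 1 = e^{i(theta - theta')}, the
    global phase being eliminated through the two edges between sites 1 and 2. *)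

Section Phases.
Context {R : realType}.
Local Notation C := R[i].
Implicit Types (s t : R) (z : C).

Lemma expiD s t : expi (s + t) = expi s * expi t.
Proof. by rewrite /expi cosD sinD; congr Complex; ring. Qed.

Lemma expi0 : expi 0 = 1 :> C.
Proof. by rewrite /expi cos0 sin0. Qed.

Lemma expiNr t : expi t * expi (- t) = 1.
Proof. by rewrite -expiD subrr expi0. Qed.

Lemma expi_neq0 t : expi t != 0.
Proof. by apply: contra_eq_neq (expiNr t) => ->; rewrite mul0r eq_sym oner_eq0. Qed.

Lemma expiN t : expi (- t) = (expi t)^-1.
Proof. by rewrite -[LHS]mul1r -(mulVf (expi_neq0 t)) -mulrA expiNr mulr1. Qed.

Lemma conj_expi t : conjc (expi t) = expi (- t).
Proof. by rewrite /expi cosN sinN. Qed.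

Lemma conjcM (z1 z2 : C) : conjc (z1 * z2) = conjc z1 * conjc z2.
Proof. exact: rmorphM. Qed.

Lemma conjcD (z1 z2 : C) : conjc (z1 + z2) = conjc z1 + conjc z2.
Proof. exact: rmorphD. Qed.

Lemma conjcN z : conjc (- z) = - conjc z.
Proof. exact: rmorphN. Qed.

Lemma conj_rc (x : R) : conjc (rc x) = rc x.
Proof. by rewrite /= oppr0. Qed.

Lemma rcD (x y : R) : rc (x + y) = rc x + rc y.
Proof. exact: rmorphD. Qed.

Lemma normc2_rc (x : R) : conjc (rc x) * rc x = rc (x ^+ 2).
Proof. by rewrite conj_rc /rc -rmorphM expr2. Qed.

Lemma normc2_phase t (x : R) : conjc (expi t * rc x) * (expi t * rc x) = rc (x ^+ 2).
Proof. by rewrite conjcM conj_expi mulrACA [expi _ * _]mulrC expiNr mul1r normc2_rc. Qed.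

Lemma expi_mul_rc (s t u x : R) : expi s * (expi t * (expi u * rc x)) = expi (s + t + u) * rc x.
Proof. by rewrite !mulrA -!expiD. Qed.

Lemma expi_circle (x y : R) : x ^+ 2 + y ^+ 2 = 1 -> exists t, expi t = (x +i* y)%C.
Proof.
move=> x2y2.
have x_itv : x \in `[(-1), 1] by rewrite in_itv /=; nra.
have sin_acos_x : sin (acos x) = `|y| by rewrite sin_acos // -x2y2 addrC addKr sqrtr_sqr.
have [y_ge0|y_lt0] := lerP 0 y.
- by exists (acos x); rewrite /expi acosK // sin_acos_x ger0_norm.
- by exists (- acos x); rewrite /expi cosN sinN acosK // sin_acos_x ltr0_norm // opprK.
Qed.

Lemma expi_unimodular z : z * conjc z = 1 -> exists t, expi t = z.
Proof. by case: z => x y [x2y2 _]; apply: expi_circle; rewrite -x2y2; ring. Qed.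

Lemma polar z : exists r t, 0 <= r /\ z = expi t * rc r.
Proof.
case: z => x y; set r := Num.sqrt (x ^+ 2 + y ^+ 2).
have r2 : r ^+ 2 = x ^+ 2 + y ^+ 2 by rewrite sqr_sqrtr // addr_ge0 // sqr_ge0.
have [r0|r_neq0] := eqVneq r 0.
  have : x ^+ 2 + y ^+ 2 = 0 by rewrite -r2 r0 expr0n.
  move/eqP; rewrite paddr_eq0 ?sqr_ge0 // !sqrf_eq0 => /andP[/eqP-> /eqP->].
  by exists 0, 0; rewrite expi0 mul1r.
have [t et] : exists t, expi t = ((x / r) +i* (y / r))%C.
  by apply: expi_circle; rewrite !expr_div_n -mulrDl -r2 divff // expf_neq0.
by exists r, t; split; [exact: sqrtr_ge0 | rewrite et /=; congr Complex; field].
Qed.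

Lemma expi_rc_eq (X r r' : R) : 0 < r -> 0 < r' -> expi X * rc r = rc r' ->
  r = r' /\ expi X = 1.
Proof.
rewrite /expi /rc => r_gt0 r'_gt0 [rcos rsin].
have sinX : sin X = 0 by apply: (mulIf (lt0r_neq0 r_gt0)); rewrite mul0r -rsin; ring.
have cosX : cos X = 1.
  move: (cos2Dsin2 X); rewrite sinX expr0n addr0 => /eqP; rewrite sqrf_eq1.
  by case/orP => /eqP // cosX; move: rcos; rewrite cosX sinX; nra.
by move: rcos; rewrite cosX sinX => rcos; split; [lra | congr Complex].
Qed.

Lemma expi_phase_eq s t (x x' : R) : 0 < x -> 0 < x' -> expi s * rc x = expi t * rc x' ->
  x = x' /\ expi (s - t) = 1.
Proof.
move=> x_gt0 x'_gt0 e; apply: expi_rc_eq => //.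
by rewrite expiD mulrAC e mulrAC expiNr mul1r.
Qed.

Lemma expi_eq1D s t : expi s = 1 -> expi t = 1 -> expi (s + t) = 1.
Proof. by rewrite expiD => -> ->; rewrite mulr1. Qed.

Lemma expi_eq1N s : expi s = 1 -> expi (- s) = 1.
Proof. by rewrite expiN => ->; rewrite invr1. Qed.

Lemma expi_sub_eq1 s t : expi (s - t) = 1 -> expi s = expi t.
Proof. by rewrite expiD expiN => /divr1_eq. Qed.

Lemma expi_inj s t : 0 <= s < 2 * pi -> 0 <= t < 2 * pi -> expi s = expi t -> s = t.
Proof.
wlog le_ts : s t / t <= s => [hwlog hs ht est|].
  by case: (lerP t s) => [le_ts | /ltW le_st]; [exact: hwlog | symmetry; exact: hwlog].
move=> /andP[s_ge0 s_lt] /andP[t_ge0 t_lt] [ecos esin].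
have pi_gt0 := pi_gt0 R.
have cos_d : cos (s - t) = 1 by rewrite cosB ecos esin cos2Dsin2.
have d_itv : 0 <= s - t < 2 * pi by apply/andP; split; lra.
suff : s - t = 0 by lra.
have [d_le|d_gt] := lerP (s - t) pi.
  by apply: cos_inj; rewrite ?in_itv /= ?cos0 ?lexx ?(ltW pi_gt0) //; apply/andP; split; lra.
suff : 2 * pi - (s - t) = 0 by lra.
apply: cos_inj; rewrite ?in_itv /= ?lexx ?(ltW pi_gt0) //; first by apply/andP; split; lra.
by rewrite cos0 cosB mulr_natl cos2pi sin2pi cos_d; ring.
Qed.

End Phases.

Section Coordinates.
Context {R : realType}.
Local Notation C := R[i].
Local Notation vec := (vec R).
Local Notation blk := (blk R).

Definition cvec2 (x0 x1 : C) : vec := \col_(i < 2) (if i == 0 :> nat then x0 else x1).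
Definition mx2 (a b c d : C) : blk :=
  \matrix_(i < 2, j < 2) if i == 0 :> nat then (if j == 0 :> nat then a else b)
                        else (if j == 0 :> nat then c else d).

Lemma sum_ord2 (F : 'I_2 -> C) : \sum_(i < 2) F i = F 0 + F 1.
Proof. by rewrite big_ord_recr big_ord1; congr (F _ + F _); apply: val_inj. Qed.

Lemma cvec2E (v : vec) : v = cvec2 (v 0 0) (v 1 0).
Proof.
by apply/matrixP => -[[|[|//]] ?] j; rewrite mxE (ord1 j); congr (v _ _); apply: val_inj.
Qed.

Lemma mx2E (A : blk) : A = mx2 (A 0 0) (A 0 1) (A 1 0) (A 1 1).
Proof.
by apply/matrixP => -[[|[|//]] ?] -[[|[|//]] ?]; rewrite mxE; congr (A _ _); apply: val_inj.
Qed.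

Lemma cvec2_inj x0 x1 y0 y1 : cvec2 x0 x1 = cvec2 y0 y1 -> x0 = y0 /\ x1 = y1.
Proof.
move=> exy; have entry i : cvec2 x0 x1 i 0 = cvec2 y0 y1 i 0 by rewrite exy.
by move: (entry 0) (entry 1); rewrite !mxE.
Qed.

Lemma e1E : e1 R = cvec2 1 0. Proof. by []. Qed.

Lemma e2E : e2 R = cvec2 0 1.
Proof. by apply/matrixP => -[[|[|//]] ?] j; rewrite !mxE. Qed.

Lemma add_cvec2 x0 x1 y0 y1 : cvec2 x0 x1 + cvec2 y0 y1 = cvec2 (x0 + y0) (x1 + y1).
Proof. by apply/matrixP => -[[|[|//]] ?] j; rewrite !mxE. Qed.

Lemma scale_cvec2 c x0 x1 : c *: cvec2 x0 x1 = cvec2 (c * x0) (c * x1).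
Proof. by apply/matrixP => -[[|[|//]] ?] j; rewrite !mxE. Qed.

Lemma mul_mx2_cvec2 a b c d x0 x1 :
  mx2 a b c d *m cvec2 x0 x1 = cvec2 (a * x0 + b * x1) (c * x0 + d * x1).
Proof. by apply/matrixP => -[[|[|//]] ?] j; rewrite !mxE sum_ord2 !mxE. Qed.

Lemma mul_mx2 a b c d a' b' c' d' : mx2 a b c d *m mx2 a' b' c' d' =
  mx2 (a * a' + b * c') (a * b' + b * d') (c * a' + d * c') (c * b' + d * d').
Proof. by apply/matrixP => -[[|[|//]] ?] -[[|[|//]] ?]; rewrite !mxE sum_ord2 !mxE. Qed.

Lemma mx2_1 : 1%:M = mx2 1 0 0 1 :> blk.
Proof. by apply/matrixP => -[[|[|//]] ?] -[[|[|//]] ?]; rewrite !mxE. Qed.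

Lemma mx2_inj a b c d a' b' c' d' : mx2 a b c d = mx2 a' b' c' d' ->
  [/\ a = a', b = b', c = c' & d = d'].
Proof.
move=> e; have entry i j : mx2 a b c d i j = mx2 a' b' c' d' i j by rewrite e.
by move: (entry 0 0) (entry 0 1) (entry 1 0) (entry 1 1); rewrite !mxE.
Qed.

Lemma adj_mx2 a b c d : adj (mx2 a b c d) = mx2 (conjc a) (conjc c) (conjc b) (conjc d).
Proof. by apply/matrixP => -[[|[|//]] ?] -[[|[|//]] ?]; rewrite !mxE. Qed.

End Coordinates.

Section Qubit.
Context {R : realType}.
Local Notation C := R[i].
Local Notation vec := (vec R).
Local Notation blk := (blk R).
Local Notation e1 := (e1 R).
Local Notation e2 := (e2 R).
Implicit Types (x y z v w : vec) (W : blk).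

Definition cdot x y : C := conjc (x 0 0) * y 0 0 + conjc (x 1 0) * y 1 0.

Lemma cdot_cvec2 a b c d : cdot (cvec2 a b) (cvec2 c d) = conjc a * c + conjc b * d.
Proof. by rewrite /cdot !mxE. Qed.

Lemma conj_cdot x y : conjc (cdot x y) = cdot y x.
Proof. by rewrite /cdot conjcD !conjcM !conjcK; congr (_ + _); rewrite mulrC. Qed.

Lemma adj_mulmx_vec x y : adj x *m y = (cdot x y)%:M.
Proof. by apply/matrixP => i j; rewrite !ord1 !mxE sum_ord2 !mxE mulr1n. Qed.

Lemma scalar_mx1_inj (a b : C) : a%:M = b%:M :> 'M_1 -> a = b.
Proof. by move=> e; have := congr1 (fun M : 'M[C]_1 => M 0 0) e; rewrite !mxE. Qed.

Lemma unit_vecP x : unit_vec x <-> cdot x x = 1.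
Proof. by rewrite /unit_vec adj_mulmx_vec; split=> [/scalar_mx1_inj|->]. Qed.

Lemma onb2P x y : onb2 x y <-> [/\ cdot x x = 1, cdot y y = 1 & cdot x y = 0].
Proof.
rewrite /onb2 !adj_mulmx_vec -(raddf0 (@scalar_mx C 1)).
by split=> [[/scalar_mx1_inj-> /scalar_mx1_inj-> /scalar_mx1_inj->]|[-> -> ->]].
Qed.

Lemma adjM m n p (A : 'M[C]_(m, n)) (B : 'M[C]_(n, p)) : adj (A *m B) = adj B *m adj A.
Proof. by rewrite /adj map_mxM trmx_mul. Qed.

Lemma adjK m n (A : 'M[C]_(m, n)) : adj (adj A) = A.
Proof. by apply/matrixP => i j; rewrite !mxE conjcK. Qed.

Lemma adjZ m n c (A : 'M[C]_(m, n)) : adj (c *: A) = conjc c *: adj A.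
Proof. by apply/matrixP => i j; rewrite !mxE conjcM. Qed.

Lemma adj1 : adj 1%:M = 1%:M :> blk.
Proof. by rewrite mx2_1 adj_mx2 conjc0 conjc1. Qed.

Lemma scale_ketbra c x y : c *: ketbra x y = ketbra x (conjc c *: y).
Proof. by rewrite /ketbra adjZ conjcK scalemxAr. Qed.

Lemma ketbraZl c x y : ketbra (c *: x) y = c *: ketbra x y.
Proof. by rewrite /ketbra scalemxAl. Qed.

Lemma mulmx_ketbra W W' x y : W *m ketbra x y *m adj W' = ketbra (W *m x) (W' *m y).
Proof. by rewrite /ketbra adjM !mulmxA. Qed.

Lemma ketbra_mulmx x y v : ketbra x y *m v = cdot y v *: x.
Proof. by rewrite /ketbra -mulmxA adj_mulmx_vec mul_mx_scalar. Qed.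

Lemma ketbra_inj x y y' : unit_vec x -> ketbra x y = ketbra x y' -> y = y'.
Proof.
move=> /unit_vecP x_unit e.
have : adj x *m ketbra x y = adj x *m ketbra x y' by rewrite e.
by rewrite /ketbra !mulmxA adj_mulmx_vec x_unit !mul1mx => /(congr1 (@adj R _ _)); rewrite !adjK.
Qed.

Lemma unitary_cdot W v w : unitary2 W -> cdot (W *m v) (W *m w) = cdot v w.
Proof.
case=> WW _; apply: scalar_mx1_inj.
by rewrite -!adj_mulmx_vec adjM -mulmxA (mulmxA (adj W)) WW mul1mx.
Qed.

Lemma cdot_e1 v : cdot e1 v = v 0 0.
Proof. by rewrite /cdot !mxE conjc0 conjc1 mul1r mul0r addr0. Qed.

Lemma cdot_e2 v : cdot e2 v = v 1 0.
Proof. by rewrite /cdot !mxE conjc0 conjc1 mul1r mul0r add0r. Qed.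

Lemma onb2_e12 : onb2 e1 e2.
Proof. by apply/onb2P; rewrite !cdot_e1 !cdot_e2 !mxE. Qed.

Definition frame (p q : C) x y : blk :=
  mx2 (p * conjc (x 0 0)) (p * conjc (x 1 0)) (q * conjc (y 0 0)) (q * conjc (y 1 0)).

Lemma frame_mulmx p q x y v : frame p q x y *m v = cvec2 (p * cdot x v) (q * cdot y v).
Proof. by rewrite {1}(cvec2E v) mul_mx2_cvec2 /cdot; congr cvec2; ring. Qed.

Lemma frame_onb2 p q x y : onb2 x y ->
  frame p q x y *m x = p *: e1 /\ frame p q x y *m y = q *: e2.
Proof.
case/onb2P=> xx yy xy; have yx : cdot y x = 0 by rewrite -conj_cdot xy conjc0.
by rewrite !frame_mulmx e1E e2E !scale_cvec2 xx yy xy yx !mulr0 !mulr1.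
Qed.

Lemma frame_unitary p q x y : p * conjc p = 1 -> q * conjc q = 1 -> onb2 x y ->
  unitary2 (frame p q x y).
Proof.
move=> pp qq /onb2P[xx yy xy]; have yx : cdot y x = 0 by rewrite -conj_cdot xy conjc0.
have WW' : frame p q x y *m adj (frame p q x y) = 1%:M.
  rewrite /frame adj_mx2 mul_mx2 mx2_1 !conjcM !conjcK; congr mx2.
  - by rewrite -[RHS]pp -[RHS]mulr1 -xx /cdot; ring.
  - by rewrite -[RHS](mulr0 (p * conjc q)) -xy /cdot; ring.
  - by rewrite -[RHS](mulr0 (q * conjc p)) -yx /cdot; ring.
  - by rewrite -[RHS]qq -[RHS]mulr1 -yy /cdot; ring.
by split => //; apply: mulmx1C.
Qed.

Lemma parseval x y v w : onb2 x y ->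
  cdot v w = conjc (cdot x v) * cdot x w + conjc (cdot y v) * cdot y w.
Proof.
have one_unit : (1 : C) * conjc 1 = 1 by rewrite conjc1 mulr1.
move=> /(frame_unitary one_unit one_unit)/unitary_cdot <-.
by rewrite !frame_mulmx cdot_cvec2 !mul1r.
Qed.

Lemma conj_ketbra {L : R} {p : C} {W W' x y z} : W *m x = p *: y ->
  expi L *: (W *m ketbra x z *m adj W') = ketbra y (conjc (expi L * p) *: (W' *m z)).
Proof. by move=> Wx; rewrite mulmx_ketbra Wx ketbraZl scalerA scale_ketbra. Qed.

Lemma conj_ketbra_parallel (L : R) W W' x y z z' : unitary2 W' -> unit_vec z ->
  expi L *: (W *m ketbra x z *m adj W') = ketbra y z' -> exists c, W *m x = c *: y.
Proof.
move=> W'_unitary /unit_vecP zz e.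
exists (expi (- L) * cdot z' (W' *m z)); rewrite -scalerA -(ketbra_mulmx y z') -e.
rewrite mulmx_ketbra -scalemxAl ketbra_mulmx (unitary_cdot _ _ W'_unitary) zz scale1r.
by rewrite scalerA mulrC expiNr scale1r.
Qed.

Lemma frame_e12_mulmx p q (x0 x1 : C) : frame p q e1 e2 *m cvec2 x0 x1 = cvec2 (p * x0) (q * x1).
Proof. by rewrite frame_mulmx cdot_e1 cdot_e2 !mxE. Qed.

Lemma unitary_diag W (c d : C) : unitary2 W -> W *m e1 = c *: e1 -> W *m e2 = d *: e2 ->
  exists a b, W = frame (expi a) (expi b) e1 e2.
Proof.
rewrite (mx2E W) e1E e2E !mul_mx2_cvec2 !scale_cvec2 !(mulr0, mulr1, addr0, add0r).
case=> WW _ /cvec2_inj[_ W10] /cvec2_inj[W01 _].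
move: WW; rewrite adj_mx2 mul_mx2 mx2_1 W10 W01 conjc0 !mulr0 addr0 add0r.
case/mx2_inj; rewrite add0r ![conjc _ * _]mulrC => W00 _ _ W11.
have [a ea] := expi_unimodular W00; have [b eb] := expi_unimodular W11.
by exists a, b; rewrite /frame !mxE /= oppr0 !mulr1 !mulr0 ea eb.
Qed.

End Qubit.

Section TransitionCoordinates.
Context {R : realType}.
Local Notation C := R[i].
Local Notation vec := (vec R).
Implicit Types (x y z w : vec).

Lemma sq_sqr (r : R) : 0 <= r <= 1 -> sq r ^+ 2 = 1 - r ^+ 2.
Proof. by case/andP=> r_ge0 r_le1; rewrite sqr_sqrtr // subr_ge0 expr_le1. Qed.

Lemma sq_gt0 (r : R) : 0 < r < 1 -> 0 < sq r.
Proof. by case/andP=> r_gt0 r_lt1; rewrite sqrtr_gt0 subr_gt0 expr_lt1 // ltW. Qed.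

Lemma unit_pair_polar (a b : C) : conjc a * a + conjc b * b = 1 ->
  exists r s t, [/\ 0 <= r <= 1, a = expi s * rc r & b = expi t * rc (sq r)].
Proof.
move=> ab_unit; have [r [s [r_ge0 ea]]] := polar a; have [r' [t [r'_ge0 eb]]] := polar b.
have [r2 _] : rc (r ^+ 2) + rc (r' ^+ 2) = 1.
  by rewrite -(normc2_phase s r) -(normc2_phase t r') -ea -eb.
exists r, s, t; split => //; last by rewrite /sq -r2 addrC addKr sqrtr_sqr ger0_norm.
by rewrite r_ge0 /=; nra.
Qed.

Definition transition_coords x y z w (r a b k : R) :=
  [/\ 0 <= r <= 1, cdot x z = expi a * rc r, cdot y z = expi b * rc (sq r),
      cdot x w = - (expi (k - b) * rc (sq r)) & cdot y w = expi (k - a) * rc r].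

Lemma onb2_transition_coords x y z w : onb2 x y -> onb2 z w ->
  exists r a b k, transition_coords x y z w r a b k.
Proof.
move=> xy_onb /onb2P[zz ww zw].
set a := cdot x z; set b := cdot y z; set c := cdot x w; set d := cdot y w.
have ab_unit : conjc a * a + conjc b * b = 1 by rewrite -zz (parseval z z xy_onb).
have cd_unit : conjc c * c + conjc d * d = 1 by rewrite -ww (parseval w w xy_onb).
have ab_cd : conjc a * c + conjc b * d = 0 by rewrite -zw (parseval z w xy_onb).
set det := a * d - b * c.
have ac : conjc a * c = - (conjc b * d) by rewrite -[LHS]subr0 -ab_cd; ring.
have ec : c = - conjc b * det.
  have -> : c = a * (conjc a * c) + conjc b * b * c by rewrite -[LHS]mulr1 -ab_unit; ring.
  by rewrite ac /det; ring.
have ed : d = conjc a * det.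
  have -> : d = conjc a * a * d + b * (conjc b * d) by rewrite -[LHS]mulr1 -ab_unit; ring.
  by rewrite -[conjc b * d]opprK -ac /det; ring.
have [k ek] : exists k, expi k = det.
  apply: expi_unimodular; rewrite -cd_unit ec ed !conjcM conjcN !conjcK.
  by rewrite -[LHS]mulr1 -ab_unit; ring.
have [r [s [t [r_bnd ea eb]]]] := unit_pair_polar ab_unit.
exists r, s, t, k; split => //.
- by rewrite -/c ec -ek eb conjcM conj_rc conj_expi mulNr mulrAC -expiD addrC.
- by rewrite -/d ed -ek ea conjcM conj_rc conj_expi mulrAC -expiD addrC.
Qed.

End TransitionCoordinates.

Section ModelWalk.
Context {R : realType}.
Local Notation vec := (vec R).

Definition site (u u0 : R) (m : int) : R := if m == 0 then u0 else u.

Lemma site0 u u0 : site u u0 0 = u0.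
Proof. by rewrite /site eqxx. Qed.

Lemma site_neq0 u u0 m : m != 0 -> site u u0 m = u.
Proof. by rewrite /site => /negbTE->. Qed.

(* The bras zeta_{m-1,m} and zeta_{m+1,m} of U_{r,nu}, written uniformly in m. *)
Definition model_zetaL (r r0 nu1 : R) (m : int) : vec :=
  cvec2 (rc (site r r0 m)) (expi (site 0 nu1 m) * rc (sq (site r r0 m))).

Definition model_zetaR (r r0 nu1 nu2 : R) (m : int) : vec :=
  cvec2 (- (expi (site 0 nu2 m) * rc (sq (site r r0 m))))
        (expi (site 0 (nu1 + nu2) m) * rc (site r r0 m)).

Lemma U_rnu_up (r r0 nu1 nu2 : R) n :
  U_rnu r r0 nu1 nu2 n (n + 1) = ketbra (e1 R) (model_zetaL r r0 nu1 (n + 1)).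
Proof.
rewrite /U_rnu /model_zetaL /site eqxx.
have -> : (n + 1 == n - 1) = false by apply/eqP; lia.
rewrite addr0 e1E e2E; case: (n + 1 == 0);
  by rewrite !scale_cvec2 !add_cvec2 !(mulr0, mulr1, addr0, add0r) ?expi0 ?mul1r.
Qed.

Lemma U_rnu_dn (r r0 nu1 nu2 : R) n :
  U_rnu r r0 nu1 nu2 (n + 1) n = ketbra (e2 R) (model_zetaR r r0 nu1 nu2 n).
Proof.
rewrite /U_rnu /model_zetaR /site addrK eqxx.
have -> : (n == n + 1 + 1) = false by apply/eqP; lia.
rewrite add0r e1E e2E; case: (n == 0);
  by rewrite !scale_cvec2 !add_cvec2 !(mulr0, mulr1, addr0, add0r) ?expi0 ?mul1r.
Qed.

Lemma U_rnu_far (r r0 nu1 nu2 : R) n m :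
  m != n + 1 -> m != n - 1 -> U_rnu r r0 nu1 nu2 n m = 0.
Proof. by move=> /negbTE m_up /negbTE m_dn; rewrite /U_rnu m_up m_dn addr0. Qed.

Lemma site_bounds (r r0 : R) m : 0 <= r <= 1 -> 0 <= r0 <= 1 -> 0 <= site r r0 m <= 1.
Proof. by rewrite /site; case: (m == 0). Qed.

Lemma model_zetaL_unit (r r0 nu1 : R) m : 0 <= r <= 1 -> 0 <= r0 <= 1 ->
  unit_vec (model_zetaL r r0 nu1 m).
Proof.
move=> r_bnd r0_bnd; apply/unit_vecP; rewrite cdot_cvec2 normc2_rc normc2_phase -rcD.
by rewrite sq_sqr ?site_bounds // addrC subrK.
Qed.

Lemma model_zetaR_unit (r r0 nu1 nu2 : R) m : 0 <= r <= 1 -> 0 <= r0 <= 1 ->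
  unit_vec (model_zetaR r r0 nu1 nu2 m).
Proof.
move=> r_bnd r0_bnd; apply/unit_vecP; rewrite cdot_cvec2 conjcN mulrNN !normc2_phase -rcD.
by rewrite sq_sqr ?site_bounds // subrK.
Qed.

Lemma Phi_atE (alpha theta : R) :
  Phi_at alpha theta = cvec2 (rc alpha) (expi theta * rc (sq alpha)).
Proof. by rewrite /Phi_at e1E e2E !scale_cvec2 add_cvec2 !mulr0 !mulr1 addr0 add0r. Qed.

End ModelWalk.

Section Gauge.
Context {R : realType}.
Local Notation vec := (vec R).
Local Notation blk := (blk R).

Variables (xiR xiL zetaL zetaR : int -> vec) (r r0 a a0 b b0 k k0 : R).
Hypothesis xi_onb : forall m, onb2 (xiR m) (xiL m).
Hypothesis coords : forall m, transition_coords (xiR m) (xiL m) (zetaL m) (zetaR m)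
  (site r r0 m) (site a a0 m) (site b b0 m) (site k k0 m).

Definition gauge_P (n : int) : R := n%:~R * (k / 2 - a) + b - (if 0 <= n then a0 else a).
Definition gauge_Q (n : int) : R := gauge_P n + site a a0 n - b.
Definition gauge (n : int) : blk :=
  frame (expi (gauge_P n)) (expi (gauge_Q n)) (xiR n) (xiL n).

Lemma gauge_P_succ n : gauge_P (n + 1) = gauge_P n + k / 2 - site a a0 (n + 1).
Proof.
rewrite /gauge_P /site intrD.
have [->|n_neq] := eqVneq n (-1); first by rewrite /=; ring.
have -> : (n + 1 == 0) = false by apply/eqP; lia.
have [n_ge0|n_lt0] := lerP 0 n.
  have -> : (0 <= n + 1) = true by lia.
  by ring.
have -> : (0 <= n + 1) = false by lia.
by ring.
Qed.

Lemma gauge_Q_succ n : gauge_Q (n + 1) = gauge_P n + k / 2 - b.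
Proof. by rewrite /gauge_Q gauge_P_succ; ring. Qed.

Lemma gauge_Q0 : gauge_Q 0 = 0.
Proof. by rewrite /gauge_Q /gauge_P site0 /=; ring. Qed.

Lemma gauge_unitary n : unitary2 (gauge n).
Proof. by apply: frame_unitary; rewrite ?conj_expi ?expiNr. Qed.

Lemma gauge_up n :
  expi (k / 2) *: (gauge n *m ketbra (xiR n) (zetaL (n + 1)) *m adj (gauge (n + 1))) =
  ketbra (e1 R) (model_zetaL r r0 (b0 - b) (n + 1)).
Proof.
have [xiR_im _] := frame_onb2 (expi (gauge_P n)) (expi (gauge_Q n)) (xi_onb n).
have [_ ea eb _ _] := coords (n + 1).
rewrite (conj_ketbra xiR_im) frame_mulmx ea eb scale_cvec2 -expiD conj_expi !expi_mul_rc.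
congr (ketbra _ (cvec2 _ (expi _ * _))).
- by rewrite gauge_P_succ (_ : _ + _ + _ = 0) ?expi0 ?mul1r //; ring.
- by rewrite gauge_Q_succ /site; case: (_ == 0); ring.
Qed.

Lemma gauge_dn n :
  expi (k / 2) *: (gauge (n + 1) *m ketbra (xiL (n + 1)) (zetaR n) *m adj (gauge n)) =
  ketbra (e2 R) (model_zetaR r r0 (b0 - b) (k0 - k + b - b0) n).
Proof.
have [_ xiL_im] := frame_onb2 (expi (gauge_P (n + 1))) (expi (gauge_Q (n + 1)))
                              (xi_onb (n + 1)).
have [_ _ _ ec ed] := coords n.
rewrite (conj_ketbra xiL_im) frame_mulmx ec ed scale_cvec2 -expiD conj_expi !mulrN.
rewrite !expi_mul_rc /model_zetaR.
congr (ketbra _ (cvec2 (- (expi _ * _)) (expi _ * _))).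
- by rewrite gauge_Q_succ /site; case: (_ == 0); lra.
- by rewrite gauge_Q_succ /gauge_Q /site; case: (_ == 0); lra.
Qed.

Lemma gauge_state Phi alpha s t :
  cdot (xiR 0) Phi = expi s * rc alpha -> cdot (xiL 0) Phi = expi t * rc (sq alpha) ->
  expi (- gauge_P 0 - s) *: (gauge 0 *m Phi) = Phi_at alpha (t - s - gauge_P 0).
Proof.
move=> eR eL; rewrite frame_mulmx eR eL scale_cvec2 !expi_mul_rc Phi_atE gauge_Q0.
by congr (cvec2 _ (expi _ * _)); [rewrite (_ : _ + _ + _ = 0) ?expi0 ?mul1r // | ]; ring.
Qed.

End Gauge.

Section Existence.
Context {R : realType}.

Lemma one_defect_coords (B : op R) : one_defect_qw B ->
  exists xiR xiL zetaL zetaR (r r0 a a0 b b0 k k0 : R),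
    qw_rep B xiR xiL zetaL zetaR /\
    forall m, transition_coords (xiR m) (xiL m) (zetaL m) (zetaR m)
                (site r r0 m) (site a a0 m) (site b b0 m) (site k k0 m).
Proof.
case=> _ [xiR [xiL [zetaL [zetaR [xi1 [xi2 [zeta1 [zeta2 [rep const]]]]]]]]].
have [xi_onb zeta_onb _] := rep.
have [r [a [b [k coords1]]]] := onb2_transition_coords (xi_onb 1) (zeta_onb 1).
have [r0 [a0 [b0 [k0 coords0]]]] := onb2_transition_coords (xi_onb 0) (zeta_onb 0).
exists xiR, xiL, zetaL, zetaR, r, r0, a, a0, b, b0, k, k0; split => // m.
have [->|m_neq0] := eqVneq m 0; first by rewrite !site0.
have [-> -> -> ->] := const m m_neq0; have [<- <- <- <-] := const 1 isT.
by rewrite !site_neq0.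
Qed.

Theorem one_defect_equiv_model (B : op R) (Phi : vec R) :
  one_defect_qw B -> init_state Phi ->
  exists rpm r0 alpha nu1 nu2 theta : R,
    [/\ 0 <= rpm <= 1, 0 <= r0 <= 1, 0 <= alpha <= 1 &
        unit_equiv B Phi (U_rnu rpm r0 nu1 nu2) (Phi_at alpha theta)].
Proof.
case/one_defect_coords=> xiR [xiL [zetaL [zetaR]]].
case=> r [r0 [a [a0 [b [b0 [k [k0 [rep coords]]]]]]]].
move=> /unit_vecP Phi_unit; have [xi_onb _ Bdef] := rep.
have [alpha [s [t [alpha_bnd eR eL]]]] : exists alpha s t, [/\ 0 <= alpha <= 1,
    cdot (xiR 0) Phi = expi s * rc alpha & cdot (xiL 0) Phi = expi t * rc (sq alpha)].
  by apply: unit_pair_polar; rewrite -(parseval Phi Phi (xi_onb 0)).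
have [r_bnd _ _ _ _] := coords 1; have [r0_bnd _ _ _ _] := coords 0.
rewrite site_neq0 // in r_bnd; rewrite site0 in r0_bnd.
exists r, r0, alpha, (b0 - b), (k0 - k + b - b0), (t - s - gauge_P a a0 b k 0); split => //.
exists (k / 2), (- gauge_P a a0 b k 0 - s), (gauge xiR xiL a a0 b k); split; [|split].
- exact: gauge_unitary.
- move=> n m; rewrite Bdef.
  have [->|m_up] := eqVneq m (n + 1).
    have -> : (n + 1 == n - 1) = false by apply/eqP; lia.
    by rewrite addr0 (gauge_up xi_onb coords) U_rnu_up.
  have [->|n_dn] := eqVneq n (m + 1).
    by rewrite addrK eqxx add0r (gauge_dn xi_onb coords) U_rnu_dn.
  have m_dn : m != n - 1 by apply: contraNneq n_dn => ->; rewrite subrK.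
  by rewrite (negbTE m_dn) addr0 mulmx0 mul0mx scaler0 U_rnu_far.
- exact: gauge_state.
Qed.

End Existence.

Section Uniqueness.
Context {R : realType}.
Local Notation blk := (blk R).
Local Notation e1 := (e1 R).
Local Notation e2 := (e2 R).

Variables (r r0 nu1 nu2 r' r0' nu1' nu2' L : R) (W : int -> blk).
Hypotheses (r_bnd : 0 < r < 1) (r0_bnd : 0 < r0 < 1) (r'_bnd : 0 < r' < 1) (r0'_bnd : 0 < r0' < 1).
Hypothesis W_unitary : forall n, unitary2 (W n).
Hypothesis W_conj : forall n m,
  expi L *: (W n *m U_rnu r r0 nu1 nu2 n m *m adj (W m)) = U_rnu r' r0' nu1' nu2' n m.

Let unit_bnd (u : R) : 0 < u < 1 -> 0 <= u <= 1.
Proof. by case/andP=> /ltW-> /ltW->. Qed.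

Let site_gt0 (u u0 : R) m : 0 < u < 1 -> 0 < u0 < 1 -> 0 < site u u0 m.
Proof. by move=> /andP[u_gt0 _] /andP[u0_gt0 _]; rewrite /site; case: (m == 0). Qed.

Let site_sq_gt0 (u u0 : R) m : 0 < u < 1 -> 0 < u0 < 1 -> 0 < sq (site u u0 m).
Proof. by move=> u_bnd u0_bnd; apply: sq_gt0; rewrite /site; case: (m == 0). Qed.

Let e12_unit : unit_vec e1 /\ unit_vec e2.
Proof. by case: (@onb2_e12 R). Qed.

Lemma model_gauge_diag n : exists a b, W n = frame (expi a) (expi b) e1 e2.
Proof.
have [c We1] : exists c, W n *m e1 = c *: e1.
  have := W_conj n (n + 1); rewrite !U_rnu_up; apply: conj_ketbra_parallel (W_unitary _) _.
  exact: model_zetaL_unit (unit_bnd r_bnd) (unit_bnd r0_bnd).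
have [d We2] : exists d, W n *m e2 = d *: e2.
  have := W_conj (n - 1 + 1) (n - 1); rewrite !U_rnu_dn subrK.
  apply: conj_ketbra_parallel (W_unitary _) _.
  exact: model_zetaR_unit (unit_bnd r_bnd) (unit_bnd r0_bnd).
exact: unitary_diag (W_unitary n) We1 We2.
Qed.

Lemma up_edge_phases n a b a' b' :
  W n = frame (expi a) (expi b) e1 e2 -> W (n + 1) = frame (expi a') (expi b') e1 e2 ->
  [/\ site r r0 (n + 1) = site r' r0' (n + 1), expi (- (L + a) + a') = 1 &
      expi (- (L + a) + b' + site 0 nu1 (n + 1) - site 0 nu1' (n + 1)) = 1].
Proof.
move=> Wn Wn1; have [Wn_e1 _] := frame_onb2 (expi a) (expi b) onb2_e12.
have := W_conj n (n + 1); rewrite !U_rnu_up Wn Wn1 (conj_ketbra Wn_e1).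
move=> /(ketbra_inj e12_unit.1); rewrite /model_zetaL frame_e12_mulmx scale_cvec2.
rewrite -expiD conj_expi !mulrA -!expiD => /cvec2_inj[eL eR].
have [-> ph1] := expi_rc_eq (site_gt0 _ r_bnd r0_bnd) (site_gt0 _ r'_bnd r0'_bnd) eL.
by have [_ ph2] := expi_phase_eq (site_sq_gt0 _ r_bnd r0_bnd) (site_sq_gt0 _ r'_bnd r0'_bnd) eR.
Qed.

Lemma dn_edge_phase n a b a' b' :
  W (n + 1) = frame (expi a) (expi b) e1 e2 -> W n = frame (expi a') (expi b') e1 e2 ->
  expi (- (L + b) + a' + site 0 nu2 n - site 0 nu2' n) = 1.
Proof.
move=> Wn1 Wn; have [_ Wn1_e2] := frame_onb2 (expi a) (expi b) onb2_e12.
have := W_conj (n + 1) n; rewrite !U_rnu_dn Wn Wn1 (conj_ketbra Wn1_e2).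
move=> /(ketbra_inj e12_unit.2); rewrite /model_zetaR frame_e12_mulmx scale_cvec2.
rewrite -expiD conj_expi !mulrN !mulrA -!expiD => /cvec2_inj[/oppr_inj eL _].
by have [_ ph] := expi_phase_eq (site_sq_gt0 _ r_bnd r0_bnd) (site_sq_gt0 _ r'_bnd r0'_bnd) eL.
Qed.

End Uniqueness.

Lemma state_phases {R : realType} (a b alpha theta alpha' theta' L' : R) :
  0 < alpha < 1 -> 0 < alpha' < 1 ->
  expi L' *: (frame (expi a) (expi b) (e1 R) (e2 R) *m Phi_at alpha theta) =
    Phi_at alpha' theta' ->
  [/\ alpha = alpha', expi (L' + a) = 1 & expi (L' + b + theta - theta') = 1].
Proof.
move=> alpha_bnd alpha'_bnd; rewrite !Phi_atE frame_e12_mulmx scale_cvec2 !mulrA -!expiD.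
case/cvec2_inj=> eL eR; have [_ ph] := expi_phase_eq (sq_gt0 alpha_bnd) (sq_gt0 alpha'_bnd) eR.
by have [-> ph'] := expi_rc_eq (andP alpha_bnd).1 (andP alpha'_bnd).1 eL.
Qed.

Theorem model_unit_equiv_inj {R : realType}
    (r r0 nu1 nu2 alpha theta r' r0' nu1' nu2' alpha' theta' : R) :
  0 < r < 1 -> 0 < r0 < 1 -> 0 < alpha < 1 -> 0 < r' < 1 -> 0 < r0' < 1 -> 0 < alpha' < 1 ->
  0 <= nu1 < 2 * pi -> 0 <= nu2 < 2 * pi -> 0 <= theta < 2 * pi ->
  0 <= nu1' < 2 * pi -> 0 <= nu2' < 2 * pi -> 0 <= theta' < 2 * pi ->
  unit_equiv (U_rnu r r0 nu1 nu2) (Phi_at alpha theta)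
             (U_rnu r' r0' nu1' nu2') (Phi_at alpha' theta') ->
  [/\ r = r', r0 = r0', nu1 = nu1', nu2 = nu2' & alpha = alpha' /\ theta = theta'].
Proof.
move=> r_bnd r0_bnd alpha_bnd r'_bnd r0'_bnd alpha'_bnd nu1_rng nu2_rng theta_rng.
move=> nu1'_rng nu2'_rng theta'_rng [L [L' [W [W_unitary [W_conj W_Phi]]]]].
have W_diag := model_gauge_diag r_bnd r0_bnd W_unitary W_conj.
have [am1 [bm1 Wm1]] := W_diag (-1); have [a0 [b0 W0]] := W_diag 0.
have [a1 [b1 W1]] := W_diag 1; have [a2 [b2 W2]] := W_diag 2.
have up := up_edge_phases r_bnd r0_bnd r'_bnd r0'_bnd W_conj.
have dn := dn_edge_phase r_bnd r0_bnd r'_bnd r0'_bnd W_conj.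
have [r0E up0a up0b] := up (-1) _ _ _ _ Wm1 W0.
have [rE _ up1b] := up 0 _ _ _ _ W0 W1.
have [_ _ up2b] := up 1 _ _ _ _ W1 W2.
have dn_m1 := dn (-1) _ _ _ _ W0 Wm1.
have dn0 := dn 0 _ _ _ _ W1 W0.
have dn1 := dn 1 _ _ _ _ W2 W1.
rewrite W0 in W_Phi; have [alphaE st_a st_b] := state_phases alpha_bnd alpha'_bnd W_Phi.
rewrite /site /= in r0E rE up0b up1b up2b dn_m1 dn0 dn1.
have LL := expi_eq1D up2b dn1.
have e_nu1 := expi_eq1D (expi_eq1D up0b dn_m1) (expi_eq1N LL).
have e_nu2 := expi_eq1D (expi_eq1D dn0 up1b) (expi_eq1N LL).
have e_theta := expi_eq1D (expi_eq1D (expi_eq1D st_b (expi_eq1N st_a)) (expi_eq1D up0a dn_m1))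
                          (expi_eq1N LL).
have phase_eq (s t X : R) :
    0 <= s < 2 * pi -> 0 <= t < 2 * pi -> expi X = 1 -> X = s - t -> s = t.
  by move=> s_rng t_rng eX Xst; apply: (expi_inj s_rng t_rng); apply: expi_sub_eq1; rewrite -Xst.
split=> //.
- by apply: phase_eq nu1_rng nu1'_rng e_nu1 _; ring.
- by apply: phase_eq nu2_rng nu2'_rng e_nu2 _; ring.
- by split=> //; apply: phase_eq theta_rng theta'_rng e_theta _; ring.
Qed.

Lemma unit_equiv_refl {R : realType} (B : op R) (Phi : vec R) : unit_equiv B Phi B Phi.
Proof.
exists 0, 0, (fun=> 1%:M : blk R); rewrite expi0 adj1.
by split=> [n|]; [split; rewrite adj1 mul1mx | split=> [n m|]; rewrite scale1r mul1mx ?mulmx1].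
Qed.

Theorem corollary3p4 (R : realType) :
  (forall (B : op R) (Phi : vec R),
     one_defect_qw B -> init_state Phi ->
     exists rpm r0 alpha nu1 nu2 theta : R,
       [/\ 0 <= rpm <= 1, 0 <= r0 <= 1, 0 <= alpha <= 1 &
           unit_equiv B Phi (U_rnu rpm r0 nu1 nu2) (Phi_at alpha theta)]) /\
  (forall rpm r0 nu1 nu2 alpha theta rpm' r0' nu1' nu2' alpha' theta' : R,
     0 < rpm < 1 -> 0 < r0 < 1 -> 0 < alpha < 1 ->
     0 < rpm' < 1 -> 0 < r0' < 1 -> 0 < alpha' < 1 ->
     0 <= nu1 < 2 * pi -> 0 <= nu2 < 2 * pi -> 0 <= theta < 2 * pi ->
     0 <= nu1' < 2 * pi -> 0 <= nu2' < 2 * pi -> 0 <= theta' < 2 * pi ->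
     (unit_equiv (U_rnu rpm r0 nu1 nu2) (Phi_at alpha theta)
                 (U_rnu rpm' r0' nu1' nu2') (Phi_at alpha' theta') <->
      [/\ rpm = rpm', r0 = r0', nu1 = nu1', nu2 = nu2' &
          (alpha = alpha' /\ theta = theta')])).
Proof.
split; first exact: one_defect_equiv_model.
move=> rpm r0 nu1 nu2 alpha theta rpm' r0' nu1' nu2' alpha' theta'
  rpm_bnd r0_bnd alpha_bnd rpm'_bnd r0'_bnd alpha'_bnd
  nu1_rng nu2_rng theta_rng nu1'_rng nu2'_rng theta'_rng; split.
- exact: model_unit_equiv_inj.
- by case=> <- <- <- <- [<- <-]; exact: unit_equiv_refl.
Qed.
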